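(* Let $P\ge 2$ be an integer. Let $\omega_1,\dots,\omega_P$ be pairwise distinct nonzero real numbers, let $\beta_1,\dots,\beta_P$ be nonzero real numbers, and let $\kappa_1,\dots,\kappa_P$ be pairwise distinct nonzero real numbers such that $1-\kappa_i\omega_j\neq 0$ for all $i,j\in\{1,\dots,P\}$. (a) Let $A=(a_{ij})_{i,j=1}^{P}$ with $a_{ij}=\dfrac{\kappa_i\beta_j}{1-\kappa_i\omega_j}$. Then $A$ is invertible and $A^{-1}=(\tilde a_{ij})_{i,j=1}^P$ with $$\tilde a_{ij}=\frac{1-\kappa_j\omega_i}{\beta_i\,\kappa_j}\;\prod_{\substack{k=1\\k\neq j}}^{P}\frac{1-\kappa_k\omega_i}{\kappa_k-\kappa_j}\;\prod_{\substack{l=1\\l\neq i}}^{P}\frac{1-\kappa_j\omega_l}{\omega_l-\omega_i}.$$ (b) Let $B=(b_{ij})_{i,j=1}^{P-1}$ with $b_{ij}=\dfrac{1-\omega_j/\omega_P}{1-\kappa_i\omega_j}$. Then $B$ is invertible and $B^{-1}=(\tilde b_{ij})_{i,j=1}^{P-1}$ with $$\tilde b_{ij}=\frac{\omega_P\,(1-\kappa_j\omega_i)}{1-\kappa_j\omega_P}\;\prod_{\substack{k=1\\k\neq j}}^{P-1}\frac{1-\kappa_k\omega_i}{\kappa_k-\kappa_j}\;\prod_{\substack{l=1\\l\neq i}}^{P}\frac{1-\kappa_j\omega_l}{\omega_l-\omega_i}.$$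
   Context: In the paper, $\omega_i$ are the weights of a $P$-level Scheduled Relaxation Jacobi scheme, $\beta_i$ their relative frequencies, $\kappa_1,\dots,\kappa_{P-1}$ the interior local maxima of the per-iteration amplification factor and $\kappa_P$ is set equal to the upper endpoint $\kappa_M=2$. In products, each factor appears once unless it depends on the product index. *)

From mathcomp Require Import all_boot all_order all_algebra.
Set Implicit Arguments. Unset Strict Implicit. Unset Printing Implicit Defensive.
Import Order.TTheory GRing.Theory Num.Theory.
Local Open Scope ring_scope.

(* Indices are 0-based: the paper's index i in {1..P} is i-1 here.
   omega, beta, kappa : nat -> R, only values at 0..P-1 matter. *)

Definition matA (R : fieldType) (P : nat) (om be ka : nat -> R) : 'M[R]_P :=
  \matrix_(i < P, j < P) (ka i * be j / (1 - ka i * om j)).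

Definition invA (R : fieldType) (P : nat) (om be ka : nat -> R) : 'M[R]_P :=
  \matrix_(i < P, j < P)
    ((1 - ka j * om i) / (be i * ka j)
     * (\prod_(k < P | k != j :> nat) ((1 - ka k * om i) / (ka k - ka j)))
     * (\prod_(l < P | l != i :> nat) ((1 - ka j * om l) / (om l - om i)))).

Definition matB (R : fieldType) (P : nat) (om ka : nat -> R) : 'M[R]_P.-1 :=
  \matrix_(i < P.-1, j < P.-1) ((1 - om j / om P.-1) / (1 - ka i * om j)).

Definition invB (R : fieldType) (P : nat) (om ka : nat -> R) : 'M[R]_P.-1 :=
  \matrix_(i < P.-1, j < P.-1)
    (om P.-1 * (1 - ka j * om i) / (1 - ka j * om P.-1)
     * (\prod_(k < P.-1 | k != j :> nat) ((1 - ka k * om i) / (ka k - ka j)))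
     * (\prod_(l < P | l != i :> nat) ((1 - ka j * om l) / (om l - om i)))).

Arguments matA {R} P om be ka.
Arguments invA {R} P om be ka.
Arguments matB {R} P om ka.
Arguments invB {R} P om ka.

From mathcomp Require Import all_boot all_order all_algebra.
From mathcomp Require Import zify ring.
Set Implicit Arguments. Unset Strict Implicit. Unset Printing Implicit Defensive.
Import Order.TTheory GRing.Theory Num.Theory.
Local Open Scope ring_scope.

(* For the nodes om_0 .. om_(n-1), Lagrange interpolation at the point 1/c reads
     sum_k p(om_k) prod_(l <> k) (1 - c om_l) / (om_l - om_k) = (-c)^(n-1) p(1/c)
   for every polynomial p of degree < n.  Up to scalar factors, the (i, j) entry of
   A * invA is such a sum, with c = ka_j and p(w) = prod_(m <> i) (1 - ka_m w):
   this p vanishes at 1/ka_j unless i = j, which gives the identity matrix.  For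
   B * invB the same argument runs over the P nodes om_0 .. om_(P-1), with
   p(w) = (om_(P-1) - w) prod_(m <> i) (1 - ka_m w); the extra node om_(P-1) is a
   root of p and so contributes nothing to the sum. *)

Lemma ord_injective (T : eqType) n N (f : nat -> T) : (n <= N)%N ->
  (forall i j, (i < N)%N -> (j < N)%N -> i <> j -> f i <> f j) ->
  injective (fun k : 'I_n => f k).
Proof.
move=> le_nN f_neq a b fab; apply: val_inj; have [//|/eqP ab] := eqVneq (val a) (val b).
have lt_N (k : 'I_n) : (k < N)%N := leq_trans (ltn_ord k) le_nN.
by case: (f_neq _ _ (lt_N a) (lt_N b) ab fab).
Qed.

Section Products.
Variable R : fieldType.

Lemma prodr_const_neq n (j : 'I_n) (c : R) : \prod_(m < n | m != j) c = c ^+ n.-1.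
Proof. by rewrite -[in RHS](card_ord n) -(cardC1 j) -prodr_const. Qed.

Lemma prod_neq_exchange (I : finType) (F : I -> R) (i j : I) :
  F j != 0 -> \prod_(m | m != j) F m = F i * \prod_(m | m != i) F m / F j.
Proof.
have prodD1 k : \prod_m F m = F k * \prod_(m | m != k) F m by exact: bigD1.
by move=> Fj0; rewrite -prodD1 (prodD1 j) [F j * _]mulrC mulfK.
Qed.

Lemma size_prod_linear_leq (I : finType) (P : pred I) (F : I -> {poly R}) :
  (forall i, P i -> size (F i) <= 2)%N -> (size (\prod_(i | P i) F i)%R <= #|P|.+1)%N.
Proof.
move=> F_le2; rewrite (leq_trans (size_poly_prod_leq _ _)) //.
have : (\sum_(i | P i) size (F i) <= \sum_(i | P i) 2)%N by apply: leq_sum.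
rewrite sum_nat_const; lia.
Qed.

End Products.

Section Lagrange.
Variables (R : fieldType) (n : nat) (x : 'I_n -> R).
Hypothesis x_inj : injective x.

Let x_sub_neq0 k l : l != k -> x k - x l != 0.
Proof. by rewrite subr_eq0 (inj_eq x_inj) eq_sym. Qed.

Lemma lagrange_interpolation (p : {poly R}) z : (size p <= n)%N ->
  p.[z] = \sum_(k < n) p.[x k] * \prod_(l < n | l != k) ((z - x l) / (x k - x l)).
Proof.
move=> size_p.
pose b k := \prod_(l < n | l != k) ((x k - x l)^-1 *: ('X - (x l)%:P)).
have horner_b k w : (b k).[w] = \prod_(l < n | l != k) ((w - x l) / (x k - x l)).
  by rewrite horner_prod; apply: eq_bigr => l _; rewrite hornerZ hornerXsubC mulrC.
have b_sample k i : (b k).[x i] = (k == i)%:R.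
  rewrite horner_b; have [<-|ki] := eqVneq k i.
    by rewrite big1 // => l lk; rewrite mulfV ?x_sub_neq0.
  by rewrite (bigD1 i) 1?eq_sym //= subrr mul0r mul0r.
have size_b k : (size (b k) <= n)%N.
  apply: leq_trans (size_prod_linear_leq _) _ => [l _|].
    by rewrite (leq_trans (size_scale_leq _ _)) ?size_XsubC.
  by rewrite cardC1 card_ord prednK // (leq_ltn_trans _ (ltn_ord k)).
have p_eq : p = \sum_(k < n) p.[x k] *: b k.
  apply/eqP; rewrite -subr_eq0; apply/eqP.
  apply: (@roots_geq_poly_eq0 _ _ [seq x k | k <- enum 'I_n]).
  - apply/allP => _ /mapP[i _ ->]; rewrite rootE hornerD hornerN horner_sum.
    rewrite (bigD1 i) //= big1 => [|k ki]; rewrite hornerZ b_sample.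
      by rewrite eqxx mulr1 addr0 subrr.
    by rewrite (negPf ki) mulr0.
  - by rewrite map_inj_uniq ?enum_uniq.
  - rewrite size_map size_enum_ord (leq_trans (size_polyD _ _)) // size_polyN.
    rewrite geq_max size_p (leq_trans (size_sum _ _ _)) //.
    by apply/bigmax_leqP => k _; rewrite (leq_trans (size_scale_leq _ _)).
rewrite {1}p_eq horner_sum; apply: eq_bigr => k _.
by rewrite hornerZ horner_b.
Qed.

Lemma lagrange_interpolation_at_inv (p : {poly R}) c : (size p <= n)%N -> c != 0 ->
  \sum_(k < n) p.[x k] * \prod_(l < n | l != k) ((1 - c * x l) / (x l - x k))
  = (- c) ^+ n.-1 * p.[c^-1].
Proof.
move=> size_p c0; rewrite (lagrange_interpolation c^-1 size_p) mulr_sumr.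
apply: eq_bigr => k _; rewrite mulrCA -(prodr_const_neq k) -big_split /=.
congr (_ * _); apply: eq_bigr => l lk.
have lk0 : x l - x k != 0 by rewrite -opprB oppr_eq0 x_sub_neq0.
by field; rewrite c0 lk0 x_sub_neq0.
Qed.

End Lagrange.

Section OmitPoly.
Variables (R : fieldType) (n : nat) (ka : 'I_n -> R).

Definition omit_poly (i : 'I_n) : {poly R} := \prod_(m < n | m != i) (1 - ka m *: 'X).

Lemma horner_omit_poly i w : (omit_poly i).[w] = \prod_(m < n | m != i) (1 - ka m * w).
Proof.
by rewrite horner_prod; apply: eq_bigr => m _; rewrite hornerD hornerN hornerC hornerZ hornerX.
Qed.

Lemma size_omit_poly i : (size (omit_poly i) <= n)%N.
Proof.
apply: leq_trans (size_prod_linear_leq _) _ => [m _|].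
  rewrite (leq_trans (size_polyD _ _)) // size_polyN geq_max size_poly1.
  by rewrite (leq_trans (size_scale_leq _ _)) ?size_polyX ?leq_b1.
by rewrite cardC1 card_ord prednK // (leq_ltn_trans _ (ltn_ord i)).
Qed.

Lemma omit_poly_at_inv (i j : 'I_n) : ka j != 0 ->
  (- ka j) ^+ n.-1 * (omit_poly i).[(ka j)^-1]
  = (i == j)%:R * \prod_(m < n | m != j) (ka m - ka j).
Proof.
move=> kaj0; rewrite horner_omit_poly; have [->|ij] := eqVneq i j.
  rewrite mulr1n mul1r -(prodr_const_neq j) -big_split /=.
  by apply: eq_bigr => m _; field.
by rewrite (bigD1 j) 1?eq_sym //= mulfV // subrr mul0r mulr0 mulr0n mul0r.
Qed.

End OmitPoly.

Section Inverses.
Variable R : fieldType.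

Lemma mulmx1_invmx n (A B : 'M[R]_n) : A *m B = 1%:M -> A \in unitmx /\ invmx A = B.
Proof.
move=> AB1; have [A_unit _] := mulmx1_unit AB1; split => //.
by rewrite -[invmx A]mulmx1 -AB1 mulmxA mulVmx // mul1mx.
Qed.

Lemma mulmx_matA_invA P (om be ka : nat -> R) :
  injective (fun k : 'I_P => om k) -> injective (fun k : 'I_P => ka k) ->
  (forall k : 'I_P, be k != 0) -> (forall k : 'I_P, ka k != 0) ->
  (forall i j : 'I_P, 1 - ka i * om j != 0) ->
  matA P om be ka *m invA P om be ka = 1%:M.
Proof.
move=> om_inj ka_inj be0 ka0 ka_om0; apply/matrixP => i j; rewrite !mxE.
pose D := \prod_(m < P | m != j) (ka m - ka j).
have D0 : D != 0 by apply/prodf_neq0 => m mj; rewrite subr_eq0 (inj_eq ka_inj).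
transitivity (\sum_(k < P) ka i / (ka j * D) *
  ((omit_poly (fun m : 'I_P => ka m) i).[om k]
   * \prod_(l < P | l != k) ((1 - ka j * om l) / (om l - om k)))).
  apply: eq_bigr => k _; rewrite !mxE horner_omit_poly.
  rewrite [\prod_(m < P | _) ((1 - _ * om k) / _)]prodf_div -/D.
  rewrite (@prod_neq_exchange _ _ (fun m : 'I_P => 1 - ka m * om k) i j) //.
  by field; rewrite D0 ka0 be0 !ka_om0.
rewrite -big_distrr /= (lagrange_interpolation_at_inv om_inj) ?size_omit_poly // omit_poly_at_inv //.
have [->|_] := eqVneq i j; last by rewrite mulr0n !mul0r mulr0.
by rewrite mulr1n mul1r -/D; field; rewrite ka0 D0.
Qed.

Lemma mulmx_matB_invB Q (om ka : nat -> R) :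
  injective (fun k : 'I_Q.+1 => om k) -> injective (fun k : 'I_Q => ka k) ->
  om Q != 0 -> (forall k : 'I_Q, ka k != 0) ->
  (forall (i : 'I_Q) (j : 'I_Q.+1), 1 - ka i * om j != 0) ->
  matB Q.+1 om ka *m invB Q.+1 om ka = 1%:M.
Proof.
move=> om_inj ka_inj omQ0 ka0 ka_om0; apply/matrixP => i j; rewrite !mxE.
pose D := \prod_(m < Q | m != j) (ka m - ka j).
have D0 : D != 0 by apply/prodf_neq0 => m mj; rewrite subr_eq0 (inj_eq ka_inj).
have ka_omQ0 : 1 - ka j * om Q != 0 := ka_om0 j ord_max.
have ka_om0' (m k : 'I_Q) : 1 - ka m * om k != 0 := ka_om0 m (widen_ord (leqnSn Q) k).
pose q := ((om Q)%:P - 'X) * omit_poly (fun m : 'I_Q => ka m) i.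
have horner_q w : q.[w] = (om Q - w) * (omit_poly (fun m : 'I_Q => ka m) i).[w].
  by rewrite hornerM hornerD hornerN hornerC hornerX.
transitivity (\sum_(k < Q.+1) ((1 - ka j * om Q) * D)^-1 *
  (q.[om k] * \prod_(l < Q.+1 | l != k) ((1 - ka j * om l) / (om l - om k)))).
  rewrite big_ord_recr /= horner_q subrr !mul0r mulr0 addr0.
  apply: eq_bigr => k _; rewrite !mxE /= horner_q horner_omit_poly.
  rewrite [\prod_(m < Q | _) ((1 - _ * om k) / _)]prodf_div -/D.
  rewrite (@prod_neq_exchange _ _ (fun m : 'I_Q => 1 - ka m * om k) i j) //.
  by field; rewrite D0 ka_omQ0 omQ0 !ka_om0'.
rewrite -big_distrr /= (lagrange_interpolation_at_inv om_inj) ?ka0 //; last first.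
  rewrite (leq_trans (size_polyMleq _ _)) // -opprB size_polyN size_XsubC.
  by rewrite add2n ltnS size_omit_poly.
have Q_gt0 : (0 < Q)%N := leq_ltn_trans (leq0n i) (ltn_ord i).
rewrite horner_q /= -[Q in (- ka j) ^+ Q](prednK Q_gt0) exprS mulrACA omit_poly_at_inv //.
have [_|_] := eqVneq i j; last by rewrite mulr0n !mul0r !mulr0.
by rewrite mulr1n mul1r -/D; field; rewrite ka0 D0 ka_omQ0.
Qed.

End Inverses.

Theorem lemma1 (R : realFieldType) (P : nat) (om be ka : nat -> R) :
  (2 <= P)%N ->
  (forall i j, (i < P)%N -> (j < P)%N -> i <> j -> om i <> om j) ->
  (forall i, (i < P)%N -> om i <> 0) ->
  (forall i, (i < P)%N -> be i <> 0) ->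
  (forall i j, (i < P)%N -> (j < P)%N -> i <> j -> ka i <> ka j) ->
  (forall i, (i < P)%N -> ka i <> 0) ->
  (forall i j, (i < P)%N -> (j < P)%N -> 1 - ka i * om j <> 0) ->
  (matA P om be ka \in unitmx /\ invmx (matA P om be ka) = invA P om be ka) /\
  (matB P om ka \in unitmx /\ invmx (matB P om ka) = invB P om ka).
Proof.
move=> P_ge2 om_neq om0 be0 ka_neq ka0 ka_om0; split.
  apply/mulmx1_invmx/mulmx_matA_invA.
  - exact: ord_injective (leqnn P) om_neq.
  - exact: ord_injective (leqnn P) ka_neq.
  - by move=> k; apply/eqP/be0.
  - by move=> k; apply/eqP/ka0.
  - by move=> i j; apply/eqP/ka_om0.
case: P P_ge2 om_neq om0 ka_neq ka0 ka_om0 {be0} => [//|Q] _ om_neq om0 ka_neq ka0 ka_om0.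
apply/mulmx1_invmx/mulmx_matB_invB.
- exact: ord_injective (leqnn Q.+1) om_neq.
- exact: ord_injective (leqnSn Q) ka_neq.
- exact/eqP/om0/ltnSn.
- by move=> k; apply/eqP/ka0/leqW.
- by move=> i j; apply/eqP/ka_om0 => //; apply: leqW.
Qed.
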